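(* Under the standing assumptions, suppose $\bar u\in X\setminus\{0\}$ satisfies $\bar\lambda:=R(\bar u)=\max_{u\in X\setminus\{0\}}R(u)<\infty$, and let $\bar\zeta\in\partial J(\bar u)$. Then $\bar\zeta/\bar\lambda\in\partial H(\bar u)$; that is, $\bar u$ is a $p$-eigenvector of $J$ with subgradient $\bar\zeta$ and eigenvalue $\bar\lambda$.
   Context: Standing assumptions: $X$ is a real reflexive Banach space with dual $X^*$ and duality pairing $\langle\cdot,\cdot\rangle$; $\Gamma_0(X)$ is the class of proper, lower semi-continuous, convex functionals $X\to\mathbb{R}\cup\{+\infty\}$. Fix $1<p<\infty$ and $q=\frac{p}{p-1}$. Let $J\in\Gamma_0(X)$, and let $H\in\Gamma_0(X)$ be absolutely $p$-homogeneous ($H(tu)=|t|^pH(u)$) such that $|u|_H:=(pH(u))^{1/p}$ is a norm on $X$, so $H(u)=\frac1p|u|_H^p$. The subdifferential is $\partial J(u)=\{\zeta\in X^*:\ J(u)+\langle\zeta,v-u\rangle\le J(v)\ \forall v\in X\}$. Growth assumption: there is $c>0$ with $H(u)\le cJ(u)$ for all $u\in X$. The Rayleigh quotient is $R(u)=J(u)/H(u)$ for $u\ne0$. A $p$-eigenvector of $J$: $u\in X\setminus\{0\}$ with subgradient $\zeta\in\partial J(u)$ and eigenvalue $\lambda=R(u)\in\mathbb{R}$ such that $\zeta\in\lambda\,\partial H(u)$. *)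

From HB Require Import structures.
From mathcomp Require Import all_boot all_order all_algebra.
From mathcomp Require Import all_classical all_reals all_analysis.
Set Implicit Arguments. Unset Strict Implicit. Unset Printing Implicit Defensive.
Import Order.TTheory GRing.Theory Num.Theory.
Import numFieldNormedType.Exports.
Local Open Scope ring_scope.

Section Defs.
Context {R : realType} {X : normedModType R}.

Definition is_dual (f : X -> R) : Prop :=
  (forall (a : R) (x y : X), f (a *: x + y)%R = (a * f x + f y)%R) /\ continuous f.

Definition dual_bound (f : X -> R) (M : R) : Prop :=
  forall x : X, (`|f x| <= M * `|x|)%R.

(* reflexivity: every bounded linear functional on X^* is evaluation at a point *)
Definition reflexive_space : Prop :=
  forall Phi : (X -> R) -> R,
    (forall (a : R) (f g : X -> R), is_dual f -> is_dual g ->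
        Phi (fun x => a * f x + g x)%R = (a * Phi f + Phi g)%R) ->
    (exists C : R, forall (f : X -> R) (M : R), is_dual f -> dual_bound f M ->
        (`|Phi f| <= C * M)%R) ->
    exists x : X, forall f, is_dual f -> Phi f = f x.

Definition Gamma0 (F : X -> \bar R) : Prop :=
  [/\ (forall u, F u != -oo%E),
      (exists u, (F u < +oo)%E),
      lower_semicontinuous F &
      (forall (t : R) (u v : X), 0 < t < 1 ->
          (F (t *: u + (1 - t) *: v)%R <= t%:E * F u + (1 - t)%:E * F v)%E)].

Definition is_norm (N : X -> R) : Prop :=
  [/\ (forall u, 0 <= N u)%R,
      (forall u, N u = 0 -> u = 0),
      (forall (t : R) u, N (t *: u) = `|t| * N u)%R &
      (forall u v, N (u + v)%R <= N u + N v)%R].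

Definition abs_p_homogeneous (p : R) (H : X -> \bar R) : Prop :=
  forall (t : R) (u : X), H (t *: u) = ((`|t| `^ p)%:E * H u)%E.

(* |u|_H := (p H(u))^(1/p) ; H is finite-valued whenever this is a norm *)
Definition Hnorm (p : R) (H : X -> \bar R) (u : X) : R :=
  ((p * fine (H u)) `^ p^-1)%R.

Definition Hnorm_is_norm (p : R) (H : X -> \bar R) : Prop :=
  (forall u, H u \is a fin_num) /\ is_norm (Hnorm p H).

Definition subdiff (F : X -> \bar R) (u : X) (z : X -> R) : Prop :=
  is_dual z /\ forall v, (F u + (z (v - u)%R)%:E <= F v)%E.

(* Rayleigh quotient R(u) = J(u)/H(u) (H finite and > 0 for u <> 0) *)
Definition Rayleigh (J H : X -> \bar R) (u : X) : \bar R :=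
  (J u * ((fine (H u))^-1)%:E)%E.

Definition p_eigenvector (J H : X -> \bar R) (u : X) (z : X -> R) (lam : R)
  : Prop :=
  [/\ (u != 0)%R, subdiff J u z, Rayleigh J H u = lam%:E &
      exists eta, subdiff H u eta /\ forall x, z x = (lam * eta x)%R].

End Defs.

(* Maximality of the Rayleigh quotient at [ubar] gives [J <= lam H] away from
   the origin, with equality at [ubar]; hence every subgradient of [J] at [ubar]
   satisfies the subgradient inequality of [lam H] at every [v <> 0].  The
   remaining point [v = 0] is reached through [ubar / 2]: since [p > 1],
   [H (ubar / 2) <= H ubar / 2], which forces [zbar ubar >= lam H ubar]. *)

From HB Require Import structures.
From mathcomp Require Import all_boot all_order all_algebra.
From mathcomp Require Import all_classical all_reals all_analysis.
From mathcomp Require Import lra.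
Import Order.TTheory GRing.Theory Num.Theory.
Import numFieldNormedType.Exports.
Set Implicit Arguments. Unset Strict Implicit. Unset Printing Implicit Defensive.
Local Open Scope ring_scope.

Section DualFunctionals.
Variables (R : realType) (X : normedModType R).

Lemma is_dual0 (f : X -> R) : is_dual f -> f 0 = 0.
Proof.
by case=> lin _; have := lin 1 0 0; rewrite scale1r addr0 mul1r => ?; lra.
Qed.

Lemma is_dualZ (f : X -> R) a x : is_dual f -> f (a *: x) = a * f x.
Proof.
move=> fd; have [lin _] := fd.
by have := lin a x 0; rewrite (is_dual0 fd) !addr0.
Qed.

Lemma is_dualMr (f : X -> R) k : is_dual f -> is_dual (fun x => f x * k).
Proof.
case=> lin cont; split; first by move=> a x y; rewrite lin mulrDl mulrA.
by move=> x; apply: cvgM; [exact: cont | exact: cvg_cst].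
Qed.

End DualFunctionals.

Section HomogeneousFunctional.
Variables (R : realType) (X : normedModType R) (p : R) (H : X -> \bar R).
Hypotheses (p_gt1 : 1 < p) (Hfin : forall u, H u \is a fin_num)
  (Hhom : abs_p_homogeneous p H).

Lemma homog_fineZ t u : fine (H (t *: u)) = `|t| `^ p * fine (H u).
Proof. by rewrite Hhom -(fineK (Hfin u)) -EFinM. Qed.

Lemma homog_fine0 : fine (H 0) = 0.
Proof.
have p_neq0 : p != 0 by rewrite gt_eqF // (lt_trans ltr01).
by have := homog_fineZ 0 0; rewrite scale0r normr0 powR0 // mul0r.
Qed.

(* [H] is even, so convexity between [u] and [-u] bounds [H 0 = 0] by [H u]. *)
Lemma convex_homog_fine_ge0 :
    (forall (t : R) (u v : X), 0 < t < 1 ->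
      (H (t *: u + (1 - t) *: v)%R <= t%:E * H u + (1 - t)%:E * H v)%E) ->
  forall u, 0 <= fine (H u).
Proof.
move=> Hconv u; have half : 0 < (1 / 2 : R) < 1 by apply/andP; split; lra.
have := Hconv _ u (- u) half.
have -> : (1 / 2) *: u + (1 - 1 / 2) *: - u = 0.
  by rewrite scalerN -scalerBl (_ : 1 / 2 - (1 - 1 / 2) = 0) ?scale0r //; lra.
rewrite -(scaleN1r u) -(fineK (Hfin 0)) -(fineK (Hfin u)).
rewrite -(fineK (Hfin (-1 *: u))).
rewrite homog_fineZ normrN normr1 powR1 mul1r homog_fine0.
by rewrite -!EFinM -EFinD lee_fin => ?; lra.
Qed.

Lemma homog_fine_half u : 0 <= fine (H u) ->
  fine (H ((1 / 2) *: u)) <= fine (H u) / 2.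
Proof.
move=> Hu_ge0; rewrite homog_fineZ mulrC ler_wpM2l // ger0_norm; last lra.
by rewrite div1r; apply: ge1r_powR; [apply/andP; split; lra | exact: ltW].
Qed.

(* Testing the inequality at [u / 2] gives [z u >= a H u], which is the
   inequality at [0]. *)
Lemma homog_subgradient_at0 (z : X -> R) a u : is_dual z -> 0 <= a ->
    0 <= fine (H u) ->
    (forall v, v != 0 -> a * fine (H u) + z (v - u) <= a * fine (H v)) ->
  forall v, a * fine (H u) + z (v - u) <= a * fine (H v).
Proof.
move=> zd a_ge0 Hu_ge0 ineq v; have [->|/ineq//] := eqVneq v 0.
have [->|u_neq0] := eqVneq u 0; first by rewrite subr0 (is_dual0 zd) addr0.
have half_neq0 : (1 / 2) *: u != 0 by rewrite scaler_eq0 negb_or u_neq0; lra.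
have := ineq _ half_neq0.
rewrite (_ : (1 / 2) *: u - u = (- (1 / 2)) *: u); last first.
  by rewrite -{2}(scale1r u) -scalerBl; congr (_ *: _); lra.
have := ler_wpM2l a_ge0 (homog_fine_half Hu_ge0).
rewrite homog_fine0 sub0r -(scaleN1r u) !(is_dualZ _ _ zd); lra.
Qed.

Lemma homog_fine_gt0 u : Hnorm_is_norm p H -> 0 <= fine (H u) -> u != 0 ->
  0 < fine (H u).
Proof.
move=> [_ [_ Hnorm0 _ _]] Hu_ge0 u_neq0; rewrite lt0r Hu_ge0 andbT.
apply: contra u_neq0 => /eqP Hu0; apply/eqP/Hnorm0.
by rewrite /Hnorm Hu0 mulr0 powR0 // invr_eq0 gt_eqF // (lt_trans ltr01).
Qed.

End HomogeneousFunctional.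

Section RayleighQuotient.
Variables (R : realType) (X : normedModType R) (J H : X -> \bar R).

Lemma Rayleigh_mulr u : 0 < fine (H u) ->
  J u = (Rayleigh J H u * (fine (H u))%:E)%E.
Proof. by move=> Hu_gt0; rewrite -muleA -EFinM mulVf ?gt_eqF // mule1. Qed.

Lemma Rayleigh_fin_num u : 0 < fine (H u) -> J u != -oo%E ->
  (Rayleigh J H u < +oo)%E -> Rayleigh J H u \is a fin_num.
Proof.
move=> Hu_gt0; rewrite /Rayleigh fin_numE.
case: (J u) => [r | | ] // _.
by rewrite mulyr gtr0_sg ?invr_gt0 // mul1e.
Qed.

Lemma Rayleigh_le_EFin u (l : R) : 0 < fine (H u) ->
  (Rayleigh J H u <= l%:E)%E -> (J u <= (l * fine (H u))%:E)%E.
Proof.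
move=> Hu_gt0 le_l; rewrite (Rayleigh_mulr Hu_gt0) EFinM.
by apply: lee_wpmul2r; rewrite // lee_fin ltW.
Qed.

End RayleighQuotient.

Lemma subdiff_fin_divr (R : realType) (X : normedModType R) (F : X -> \bar R)
    (u : X) (z : X -> R) (a : R) :
  (forall v, F v \is a fin_num) -> is_dual z -> 0 < a ->
  (forall v, a * fine (F u) + z (v - u) <= a * fine (F v)) ->
  subdiff F u (fun v => z v / a).
Proof.
move=> Ffin zd a_gt0 ineq; split; first exact: is_dualMr.
move=> v; rewrite -(fineK (Ffin u)) -(fineK (Ffin v)) -EFinD lee_fin.
by rewrite -(ler_pM2l a_gt0) mulrDr mulrCA divff ?gt_eqF // mulr1.
Qed.

Theorem mainTheorem4 (R : realType) (X : completeNormedModType R)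
  (p c : R) (J H : X -> \bar R) (ubar : X) (zbar : X -> R) :
  @reflexive_space R X ->
  1 < p ->
  Gamma0 J -> Gamma0 H ->
  abs_p_homogeneous p H -> Hnorm_is_norm p H ->
  0 < c -> (forall u, (H u <= c%:E * J u)%E) ->
  ubar != 0 ->
  (forall u, u != 0 -> (Rayleigh J H u <= Rayleigh J H ubar)%E) ->
  (Rayleigh J H ubar < +oo)%E ->
  subdiff J ubar zbar ->
  let lam := fine (Rayleigh J H ubar) in
  subdiff H ubar (fun v => zbar v / lam) /\
  p_eigenvector J H ubar zbar lam.
Proof.
move=> _ p_gt1 [Jninf _ _ _] [_ _ _ Hconv] Hhom Hnorm c_gt0 Hgrowth ubar_neq0
  Hmax Rfin [zd zsub] lam.
have Hfin := Hnorm.1.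
have H_ge0 := convex_homog_fine_ge0 p_gt1 Hfin Hhom Hconv.
have H_gt0 u := homog_fine_gt0 p_gt1 Hnorm (H_ge0 u).
have RE : Rayleigh J H ubar = lam%:E.
  by rewrite fineK // Rayleigh_fin_num ?H_gt0.
have Jubar : J ubar = (lam * fine (H ubar))%:E.
  by rewrite (Rayleigh_mulr J (H_gt0 _ ubar_neq0)) RE EFinM.
have lam_gt0 : 0 < lam.
  have Hubar_gt0 := H_gt0 _ ubar_neq0.
  have := Hgrowth ubar; rewrite Jubar -(fineK (Hfin ubar)) -EFinM lee_fin mulrA.
  move=> /(lt_le_trans Hubar_gt0); rewrite (pmulr_lgt0 _ Hubar_gt0).
  by rewrite pmulr_rgt0.
have ineq : forall v, lam * fine (H ubar) + zbar (v - ubar) <= lam * fine (H v).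
  apply: (homog_subgradient_at0 p_gt1 Hfin Hhom zd (ltW lam_gt0) (H_ge0 _)).
  move=> v v_neq0.
  rewrite -lee_fin EFinD -Jubar (le_trans (zsub v)) //.
  by rewrite Rayleigh_le_EFin ?H_gt0 // -RE Hmax.
have Hsub := subdiff_fin_divr Hfin zd lam_gt0 ineq.
split=> //; split=> //; exists (fun v => zbar v / lam); split=> // x.
by rewrite mulrCA divff ?gt_eqF // mulr1.
Qed.
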